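(* Let $G$ be a group with a right-invariant metric $d$, and suppose there is a group $\tilde G\supseteq G$ (with $G$ a subgroup) carrying a right-invariant metric $\tilde d$ with $\tilde d|_G=d$, such that $(\tilde G,\tilde d)$ is voidless. Then for every closed ball $B\subset G$ and every $\sigma\in G$, $B\,\triangle\,\sigma B\subseteq\partial_tB$, where $t=d(\sigma,e)$.
   Context: Closed balls in $G$: $B_r(x)=\{y\in G:d(x,y)\le r\}$; $\tilde B_r(x)$, $\partial\tilde B_r(x)=\{y\in\tilde G:\tilde d(x,y)=r\}$ are the corresponding ball and sphere in $\tilde G$, and $\partial_tB_r(x)=\{y\in G:\tilde d(y,\partial\tilde B_r(x))\le t\}$. A metric space is voidless if for all $x$ and $r>0$, every closed ball meeting both $\{y:d(x,y)<r\}$ and $\{y:d(x,y)>r\}$ also meets $\{y:d(x,y)=r\}$. $\sigma B=\{\sigma g:g\in B\}$. *)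

From Stdlib Require Import Reals.
Open Scope R_scope.

Definition is_group {G : Type} (mul : G -> G -> G) (one : G) (inv : G -> G) : Prop :=
  (forall x y z, mul (mul x y) z = mul x (mul y z)) /\
  (forall x, mul one x = x) /\ (forall x, mul x one = x) /\
  (forall x, mul (inv x) x = one) /\ (forall x, mul x (inv x) = one).

Definition is_group_hom {G H : Type} (mulG : G -> G -> G) (mulH : H -> H -> H)
  (j : G -> H) : Prop := forall x y, j (mulG x y) = mulH (j x) (j y).

Definition is_metric {X : Type} (d : X -> X -> R) : Prop :=
  (forall x y, 0 <= d x y) /\
  (forall x y, d x y = 0 <-> x = y) /\
  (forall x y, d x y = d y x) /\
  (forall x y z, d x z <= d x y + d y z).

Definition right_invariant {G : Type} (mul : G -> G -> G) (d : G -> G -> R) : Prop :=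
  forall x y g, d (mul x g) (mul y g) = d x y.

Definition ball {X : Type} (d : X -> X -> R) (x : X) (r : R) : X -> Prop :=
  fun y => d x y <= r.
Definition sphere {X : Type} (d : X -> X -> R) (x : X) (r : R) : X -> Prop :=
  fun y => d x y = r.

Definition voidless {X : Type} (d : X -> X -> R) : Prop :=
  forall (x : X) (r : R), 0 < r ->
  forall (z : X) (s : R),
    (exists y, ball d z s y /\ d x y < r) ->
    (exists y, ball d z s y /\ d x y > r) ->
    (exists y, ball d z s y /\ d x y = r).

Definition is_glb (E : R -> Prop) (m : R) : Prop :=
  (forall v, E v -> m <= v) /\ (forall b, (forall v, E v -> b <= v) -> b <= m).

(* m = inf { d(y,z) : z in S }  (exists iff S nonempty; inf of empty set = +oo). *)
Definition setdist {X : Type} (d : X -> X -> R) (y : X) (S : X -> Prop) (m : R) : Prop :=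
  is_glb (fun v => exists z, S z /\ v = d y z) m.

Definition setdist_le {X : Type} (d : X -> X -> R) (y : X) (S : X -> Prop) (t : R) : Prop :=
  exists m, setdist d y S m /\ m <= t.

(* \partial_t B_r(x) = { y in G : dt(j y, \partial \tilde B_r(j x)) <= t },
   G embedded in Gt by j. *)
Definition thick_boundary {G Gt : Type} (j : G -> Gt) (dt : Gt -> Gt -> R)
  (x : G) (r t : R) : G -> Prop :=
  fun y => setdist_le dt (j y) (sphere dt (j x) r) t.

Definition left_translate {G : Type} (mul : G -> G -> G) (sigma : G) (B : G -> Prop) : G -> Prop :=
  fun y => exists g, B g /\ y = mul sigma g.

Definition symdiff {X : Type} (A B : X -> Prop) : X -> Prop :=
  fun y => (A y /\ ~ B y) \/ (B y /\ ~ A y).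

(* Write y = sigma w.  Exactly one of y, w lies in B, and right invariance gives
   d(y, w) = d(sigma, e) = t, so the closed ball of radius t about y meets both B and
   its exterior.  Voidlessness of the ambient space then puts a point of the sphere
   of B in that ball. *)
From Stdlib Require Import Reals Lra.
Open Scope R_scope.

Lemma glb_exists (E : R -> Prop) :
  (exists v, E v) -> (exists b, forall v, E v -> b <= v) -> exists m, is_glb E m.
Proof.
  intros [v0 Ev0] [b Hb].
  set (F := fun u => E (- u)).
  assert (Fbound : bound F).
  { exists (- b). intros u Fu. specialize (Hb _ Fu). lra. }
  assert (Fne : exists u, F u).
  { exists (- v0). unfold F. rewrite Ropp_involutive. exact Ev0. }
  destruct (completeness F Fbound Fne) as [m [Hub Hlub]].
  exists (- m). split.
  - intros v Ev.
    assert (F (- v)) by (unfold F; rewrite Ropp_involutive; exact Ev).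
    specialize (Hub _ H). lra.
  - intros c Hc.
    assert (m <= - c).
    { apply Hlub. intros u Fu. specialize (Hc _ Fu). lra. }
    lra.
Qed.

Lemma setdist_le_of_mem {X : Type} (d : X -> X -> R) (y z : X) (S : X -> Prop) (t : R) :
  (forall a b, 0 <= d a b) -> S z -> d y z <= t -> setdist_le d y S t.
Proof.
  intros Dpos Sz Hyz.
  destruct (glb_exists (fun v => exists z, S z /\ v = d y z)) as [m [Hlb Hglb]].
  - exists (d y z). eauto.
  - exists 0. intros v [w [_ ->]]. apply Dpos.
  - exists m. split; [split; assumption |].
    specialize (Hlb (d y z) (ex_intro _ z (conj Sz eq_refl))). lra.
Qed.

Lemma setdist_sphere_le_of_straddle {X : Type} (d : X -> X -> R) (x y a b : X) (r t : R) :
  (forall u v, 0 <= d u v) -> voidless d -> 0 <= r ->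
  ball d y t a -> ball d y t b -> ball d x r a -> ~ ball d x r b ->
  setdist_le d y (sphere d x r) t.
Proof.
  unfold ball. intros Dpos Hvoid Hr Hya Hyb Hxa Hxb.
  destruct (Rle_lt_or_eq_dec _ _ Hxa) as [Hlt | Heq].
  - assert (r_pos : 0 < r) by (pose proof (Dpos x a); lra).
    destruct (Hvoid x r r_pos y t (ex_intro _ a (conj Hya Hlt))
                (ex_intro _ b (conj Hyb (Rnot_le_gt _ _ Hxb)))) as [z [Hyz Hxz]].
    exact (setdist_le_of_mem d y z _ t Dpos Hxz Hyz).
  - exact (setdist_le_of_mem d y a _ t Dpos Heq Hya).
Qed.

Lemma dist_mul_r_one {G : Type} (mul : G -> G -> G) (one : G) (d : G -> G -> R) (s w : G) :
  (forall w, mul one w = w) -> right_invariant mul d -> d (mul s w) w = d s one.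
Proof.
  intros mul1g Hdr. rewrite <- (mul1g w) at 2. apply Hdr.
Qed.

Lemma symdiff_left_translate {G : Type} (mul : G -> G -> G) (one : G) (inv : G -> G)
    (B : G -> Prop) (sigma y : G) :
  is_group mul one inv ->
  symdiff B (left_translate mul sigma B) y ->
  exists w, y = mul sigma w /\ ((B y /\ ~ B w) \/ (B w /\ ~ B y)).
Proof.
  intros (mulA & mul1g & _ & _ & mulgV) [[By Hy] | [[g [Bg ->]] Hy]].
  - exists (mul (inv sigma) y).
    assert (Hsw : mul sigma (mul (inv sigma) y) = y).
    { rewrite <- mulA, mulgV, mul1g. reflexivity. }
    split; [now rewrite Hsw |].
    left. split; [exact By |].
    intros Bw. apply Hy. exists (mul (inv sigma) y). now rewrite Hsw.
  - exists g. split; [reflexivity | right; split; assumption].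
Qed.

Theorem lemma4
  (G : Type) (mul : G -> G -> G) (one : G) (inv : G -> G) (d : G -> G -> R)
  (Gt : Type) (mult : Gt -> Gt -> Gt) (onet : Gt) (invt : Gt -> Gt) (dt : Gt -> Gt -> R)
  (j : G -> Gt)
  (HG : is_group mul one inv) (Hd : is_metric d) (Hdr : right_invariant mul d)
  (HGt : is_group mult onet invt) (Hdt : is_metric dt) (Hdtr : right_invariant mult dt)
  (Hj : is_group_hom mul mult j) (Hjinj : forall x y, j x = j y -> x = y)
  (Hrestr : forall x y, dt (j x) (j y) = d x y)
  (Hvoid : voidless dt) :
  forall (x : G) (r : R), 0 <= r ->
  forall (sigma : G),
  forall y : G,
    symdiff (ball d x r) (left_translate mul sigma (ball d x r)) y ->
    thick_boundary j dt x r (d sigma one) y.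
Proof.
  intros x r Hr sigma y Hy.
  destruct Hd as (Dpos & Dzero & _).
  destruct Hdt as (Tpos & _).
  destruct (symdiff_left_translate mul one inv _ sigma y HG Hy) as [w [Hyw Hin]].
  assert (near_y : ball d y (d sigma one) y).
  { unfold ball. rewrite (proj2 (Dzero y y) eq_refl). apply Dpos. }
  assert (near_w : ball d y (d sigma one) w).
  { unfold ball. rewrite Hyw, (dist_mul_r_one mul one d sigma w); [lra | apply HG | exact Hdr]. }
  unfold thick_boundary.
  destruct Hin as [[Hyin Hwout] | [Hwin Hyout]];
    [ apply (setdist_sphere_le_of_straddle dt (j x) (j y) (j y) (j w))
    | apply (setdist_sphere_le_of_straddle dt (j x) (j y) (j w) (j y)) ];
    unfold ball; rewrite ?Hrestr; assumption.
Qed.
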